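(* Let $C>0$ and $\beta_1>1/\sqrt2$ be constants, and suppose that $$-4\sum_{n=1}^\infty\log\big(1-e^{-2n\beta^2}\big)<\frac{C}{\beta^2}$$ holds for $\beta=\beta_1$. Then it holds for all $\beta\ge\beta_1$. *)

From Stdlib Require Import Reals.
From Coquelicot Require Import Coquelicot.
Open Scope R_scope.

(* theta_log_sum beta = sum_{n>=1} log(1 - exp(-2 n beta^2)).
   Index k : nat corresponds to n = k+1. *)
Definition theta_log_sum (beta : R) : R :=
  Series (fun k : nat => ln (1 - exp (- (2 * INR (S k) * beta ^ 2)))).

Definition ineq_holds (C beta : R) : Prop :=
  -4 * theta_log_sum beta < C / beta ^ 2.

From Stdlib Require Import Reals Lra.
From Coquelicot Require Import Coquelicot.
Open Scope R_scope.

(* Put x = beta^2; the inequality reads -4 x Σ ln(1 - e^{-2nx}) < C, so it suffices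
   that each term x ln(1 - e^{-2nx}) increases with x once 2x >= 1.  This is the
   monotonicity of t ln(1 - e^{-t}) on [1, +oo): with u = e^{-t} its derivative is
   ln(1 - u) + t u / (1 - u), which is positive because -ln(1 - u) < u / (1 - u). *)

Lemma neg_ln_one_sub_lt (u : R) : 0 < u < 1 -> - ln (1 - u) < u / (1 - u).
Proof.
  intros Hu.
  assert (Hinv : 1 < / (1 - u)) by (rewrite <- Rinv_1; apply Rinv_lt_contravar; lra).
  assert (Hln : 0 < ln (/ (1 - u))) by (rewrite <- ln_1; apply ln_increasing; lra).
  pose proof (exp_ineq1 _ (Rgt_not_eq _ _ Hln)) as Hexp.
  rewrite exp_ln, ln_Rinv in Hexp by lra.
  replace (u / (1 - u)) with (/ (1 - u) - 1) by (field; lra).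
  lra.
Qed.

Lemma exp_neg_le_half (t : R) : 1 <= t -> exp (- t) <= / 2.
Proof.
  intros Ht.
  assert (He : 2 < exp 1) by (pose proof (exp_ineq1 1 ltac:(lra)); lra).
  assert (Hmono : exp (- t) <= exp (- (1))).
  { destruct (Req_dec t 1) as [->|]; [lra|]. left; apply exp_increasing; lra. }
  rewrite (exp_Ropp 1) in Hmono.
  assert (/ exp 1 < / 2) by (apply Rinv_lt_contravar; lra).
  lra.
Qed.

Lemma mul_ln_one_sub_exp_increasing (s t : R) : 1 <= s -> s < t ->
  s * ln (1 - exp (- s)) < t * ln (1 - exp (- t)).
Proof.
  intros Hs Hst.
  apply (incr_function_le (fun t => t * ln (1 - exp (- t))) (Finite 1) p_infty
           (fun t => ln (1 - exp (- t)) + t * (exp (- t) / (1 - exp (- t)))));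
    simpl; try lra; intros r Hr _;
    pose proof (exp_pos (- r)); pose proof (exp_neg_le_half r Hr).
  - auto_derive; [lra | unfold Rminus; field; lra].
  - pose proof (neg_ln_one_sub_lt (exp (- r)) ltac:(lra)).
    assert (0 < exp (- r) / (1 - exp (- r))) by (apply Rdiv_lt_0_compat; lra).
    nra.
Qed.

Definition theta_term (x : R) (k : nat) : R := ln (1 - exp (- (2 * INR (S k) * x))).

Lemma INR_S_ge1 (k : nat) : 1 <= INR (S k).
Proof. rewrite S_INR; pose proof (pos_INR k); lra. Qed.

Lemma theta_term_nonpos (x : R) (k : nat) : 0 < x -> theta_term x k <= 0.
Proof.
  intros Hx; unfold theta_term.
  pose proof (INR_S_ge1 k).
  assert (exp (- (2 * INR (S k) * x)) < 1)
    by (rewrite <- exp_0; apply exp_increasing; nra).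
  pose proof (exp_pos (- (2 * INR (S k) * x))).
  rewrite <- ln_1; left; apply ln_increasing; lra.
Qed.

Lemma mul_theta_term_le (x y : R) (k : nat) : / 2 <= x <= y ->
  x * theta_term x k <= y * theta_term y k.
Proof.
  intros Hxy; unfold theta_term.
  set (m := 2 * INR (S k)).
  assert (Hm : 2 <= m) by (pose proof (INR_S_ge1 k); unfold m; lra).
  assert (Hscale : forall z, z * ln (1 - exp (- (m * z)))
                             = (m * z) * ln (1 - exp (- (m * z))) / m)
    by (intros; field; lra).
  rewrite !Hscale.
  apply Rmult_le_compat_r; [left; apply Rinv_0_lt_compat; lra|].
  destruct (Req_dec x y) as [->|Hne]; [lra|].
  left; apply mul_ln_one_sub_exp_increasing; nra.
Qed.

Lemma exp_mul_INR (n : nat) (a : R) : exp (INR n * a) = exp a ^ n.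
Proof. rewrite <- (ln_exp a) at 1; rewrite <- ln_pow by apply exp_pos; apply exp_ln, pow_lt, exp_pos. Qed.

(* |ln(1 - q^{k+1})| <= 2 q^{k+1} for q = e^{-2x} <= 1/2: a geometric majorant. *)
Lemma ex_series_theta_term (x : R) : / 2 <= x -> ex_series (theta_term x).
Proof.
  intros Hx.
  set (q := exp (- (2 * x))).
  assert (Hq : 0 < q <= / 2) by (split; [apply exp_pos | apply exp_neg_le_half; lra]).
  apply (ex_series_le (K := R_AbsRing) (V := R_CompleteNormedModule) _
           (fun k => scal (2 * q) (q ^ k))).
  2: { apply (ex_series_scal_l (K := R_AbsRing) (V := R_NormedModule)), ex_series_geom.
       rewrite Rabs_pos_eq; lra. }
  intros k.
  change (norm (theta_term x k)) with (Rabs (theta_term x k)).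
  change (scal (2 * q) (q ^ k)) with (2 * q * q ^ k).
  rewrite Rabs_left1 by (apply theta_term_nonpos; lra).
  unfold theta_term.
  replace (- (2 * INR (S k) * x)) with (INR (S k) * - (2 * x)) by ring.
  rewrite exp_mul_INR; fold q.
  assert (Hqk : 0 < q ^ k <= 1).
  { split; [apply pow_lt; lra|]. rewrite <- (pow1 k); apply pow_incr; lra. }
  assert (Hu : 0 < q ^ S k <= / 2) by (simpl; nra).
  pose proof (neg_ln_one_sub_lt (q ^ S k) ltac:(lra)) as Hln.
  assert (q ^ S k / (1 - q ^ S k) <= 2 * q ^ S k).
  { apply (Rmult_le_reg_r (1 - q ^ S k)); [lra|].
    unfold Rdiv; rewrite Rmult_assoc, Rinv_l by lra; nra. }
  simpl in *; lra.
Qed.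

Lemma mul_theta_log_sum_le (x y : R) : / 2 <= x <= y ->
  x * Series (theta_term x) <= y * Series (theta_term y).
Proof.
  intros Hxy.
  assert (Hle : Series (fun k => - y * theta_term y k)
                <= Series (fun k => - x * theta_term x k)).
  { apply Series_le.
    - intros k.
      pose proof (theta_term_nonpos y k ltac:(lra)).
      pose proof (mul_theta_term_le x y k Hxy).
      nra.
    - apply (ex_series_scal_l (V := R_NormedModule) (- x) (theta_term x)),
        ex_series_theta_term; lra. }
  rewrite !Series_scal_l in Hle.
  lra.
Qed.

Lemma ineq_holds_iff (C beta : R) : beta <> 0 ->
  ineq_holds C beta <-> -4 * (beta ^ 2 * theta_log_sum beta) < C.
Proof.
  intros Hb.
  assert (Hb2 : 0 < beta ^ 2) by (apply pow2_gt_0; exact Hb).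
  unfold ineq_holds.
  replace (-4 * (beta ^ 2 * theta_log_sum beta))
    with (-4 * theta_log_sum beta * beta ^ 2) by ring.
  split; intros H.
  - apply (Rmult_lt_compat_r (beta ^ 2)) in H; [|lra].
    replace (C / beta ^ 2 * beta ^ 2) with C in H by (field; lra); exact H.
  - apply (Rmult_lt_reg_r (beta ^ 2)); [lra|].
    replace (C / beta ^ 2 * beta ^ 2) with C by (field; lra); exact H.
Qed.

Theorem lemma2p12 (C beta1 : R) :
  0 < C -> 1 / sqrt 2 < beta1 -> ineq_holds C beta1 ->
  forall beta : R, beta1 <= beta -> ineq_holds C beta.
Proof.
  intros _ Hb1 Hh beta Hb.
  assert (Hs : 0 < 1 / sqrt 2) by (apply Rdiv_lt_0_compat, sqrt_lt_R0; lra).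
  assert (Hx1 : / 2 <= beta1 ^ 2).
  { replace (/ 2) with ((1 / sqrt 2) ^ 2)
      by (rewrite <- Rsqr_pow2, Rsqr_div', Rsqr_sqrt; [unfold Rsqr; field | lra]).
    apply pow_incr; lra. }
  assert (Hx : beta1 ^ 2 <= beta ^ 2) by (apply pow_incr; lra).
  pose proof (mul_theta_log_sum_le _ _ (conj Hx1 Hx)) as Hmono.
  apply ineq_holds_iff in Hh; [|lra].
  apply ineq_holds_iff; [lra|].
  unfold theta_log_sum in *; fold (theta_term (beta1 ^ 2)) (theta_term (beta ^ 2)) in *.
  lra.
Qed.
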